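(* Let $c_0\in\mathbb C$ with $c_0\notin\{-1,-3,-5,\dots\}$. Then for all $0\le k\le n$, $$E_{n,k}(-1,2;c_0,0)=(c_0)^{\overline n}\frac{(-\frac n2)^{\overline k}(-\frac n2+\frac12)^{\overline k}}{k!\,(\frac{c_0}2+\frac12)^{\overline k}},\qquad E_{n,k}(-1,2;c_0+1,1)=(c_0+1)^{\overline n}\frac{(-\frac n2)^{\overline k}(-\frac n2-\frac12)^{\overline k}}{k!\,(\frac{c_0}2+\frac12)^{\overline k}}.$$ These are nonzero only if $0\le k\le\lfloor n/2\rfloor$, resp. $0\le k\le\lfloor (n+1)/2\rfloor$. Equivalently, the $n$th row polynomials are $(c_0)^{\overline n}\,{}_2F_1(-\frac n2,-\frac n2+\frac12;\frac{c_0}2+\frac12\mid t)$, resp. $(c_0+1)^{\overline n}\,{}_2F_1(-\frac n2,-\frac n2-\frac12;\frac{c_0}2+\frac12\mid t)$.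
   Context: Generalized Eulerian numbers $E_{n,k}(a,b;c_0,c_\infty)$: defined by $E_{0,0}=1$, $E_{n,k}=0$ if $n<0$, $k<0$ or $k>n$, and $E_{n+1,k+1}=[-an+b(k+1)+c_0]E_{n,k+1}+[(a+b)n-bk+c_\infty]E_{n,k}$ for $n\ge0$, $k\in\mathbb Z$; row polynomial $\sum_{k=0}^nE_{n,k}t^k$. $x^{\overline k}=x(x+1)\cdots(x+k-1)$; ${}_2F_1(A,B;C\mid w)=\sum_{k\ge0}\frac{A^{\overline k}B^{\overline k}}{k!\,C^{\overline k}}w^k$. *)

From mathcomp Require Import all_boot all_order all_algebra complex reals.
Set Implicit Arguments. Unset Strict Implicit. Unset Printing Implicit Defensive.
Import Order.TTheory GRing.Theory Num.Theory.
Local Open Scope ring_scope.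

(* E_{0,0} = 1, E_{n,k} = 0 for k<0 or k>n, and for n >= 0, k in Z:
   E_{n+1,k+1} = (-a n + b(k+1) + c0) E_{n,k+1} + ((a+b) n - b k + cinf) E_{n,k}.
   Negative k are always 0, so we index k by nat; the case k = -1 of the
   recurrence gives E_{n+1,0} = (-a n + c0) E_{n,0}.  The vanishing for
   k > n follows from the recurrence (it is not imposed separately). *)
Fixpoint genEuler (F : fieldType) (a b c0 cinf : F) (n k : nat) {struct n} : F :=
  match n with
  | 0 => if k == 0%N then 1 else 0
  | n'.+1 =>
    match k with
    | 0 => (- a * n'%:R + c0) * genEuler a b c0 cinf n' 0
    | k'.+1 => (- a * n'%:R + b * k'.+1%:R + c0) * genEuler a b c0 cinf n' k'.+1
             + ((a + b) * n'%:R - b * k'%:R + cinf) * genEuler a b c0 cinf n' k'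
    end
  end.

Definition rising (F : fieldType) (x : F) (k : nat) : F :=
  \prod_(i < k) (x + i%:R).

From mathcomp Require Import all_boot all_order all_algebra complex reals.
From mathcomp Require Import ring.
Set Implicit Arguments.
Unset Strict Implicit.
Unset Printing Implicit Defensive.
Import Order.TTheory GRing.Theory Num.Theory.
Local Open Scope ring_scope.

(* Both families are E_{n,k}(-1, 2; c0 + s, s) for s = 0, 1.  Put x = n + s.
   Scaled by 4^k k! ((c0 + 1)/2)^{\overline k}, this entry is
   (c0 + s)^{\overline n} times the falling factorial x(x - 1)...(x - 2k + 1),
   as the recurrence verifies directly.  Pairing consecutive factors of the
   falling factorial yields 4^k (-x/2)^{\overline k} (-x/2 + 1/2)^{\overline k},
   hence the 2F1 coefficients; it vanishes as soon as 2k > x.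
   The hypothesis on c0 is exactly what makes the scaling factor invertible. *)

Section Factorials.
Variable F : numFieldType.

Definition falling (x : F) (j : nat) : F := \prod_(i < j) (x - i%:R).

Lemma rising0 (x : F) : rising x 0 = 1.
Proof. by rewrite /rising big_ord0. Qed.

Lemma risingS (x : F) k : rising x k.+1 = rising x k * (x + k%:R).
Proof. by rewrite /rising big_ord_recr. Qed.

Lemma falling0 (x : F) : falling x 0 = 1.
Proof. by rewrite /falling big_ord0. Qed.

Lemma fallingS (x : F) j : falling x j.+1 = falling x j * (x - j%:R).
Proof. by rewrite /falling big_ord_recr. Qed.

Lemma fallingSr (x : F) j : falling x j.+1 = x * falling (x - 1) j.
Proof.
rewrite /falling big_ord_recl subr0; congr (_ * _).
by apply: eq_bigr => i _; rewrite lift0 -natr1; ring.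
Qed.

Lemma falling_nat_eq0 (m j : nat) : (m < j)%N -> falling m%:R j = 0.
Proof.
move=> lt_mj; rewrite /falling (bigD1 (Ordinal lt_mj)) //=.
by rewrite subrr mul0r.
Qed.

Lemma falling_double (x : F) k :
  falling x k.*2 = 4 ^+ k * (rising (- (x / 2)) k * rising (- (x / 2) + 1 / 2) k).
Proof.
elim: k => [|k IH]; first by rewrite falling0 !rising0 !mulr1.
have two_ne0 : 2 != 0 :> F by rewrite pnatr_eq0.
rewrite doubleS !fallingS IH !risingS exprS -!natr1 -addnn natrD.
by field.
Qed.

End Factorials.

Section ShiftedEulerian.
Variables (F : numFieldType) (c0 : F).

Definition hgeom_denom (k : nat) : F := 4 ^+ k * (k`!%:R * rising (c0 / 2 + 1 / 2) k).

Lemma hgeom_denom0 : hgeom_denom 0 = 1.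
Proof. by rewrite /hgeom_denom rising0 expr0 !mul1r. Qed.

Lemma hgeom_denomS k :
  hgeom_denom k.+1 = hgeom_denom k * (2 * k.+1%:R * (c0 + 1 + 2 * k%:R)).
Proof.
have two_ne0 : 2 != 0 :> F by rewrite pnatr_eq0.
rewrite /hgeom_denom exprS factS natrM risingS -!natr1.
by field.
Qed.

(* With [x = n + s] the inductive step reduces to
   [(x + 2k + 2 + c0)(x - 2k - 1) + 2(k + 1)(c0 + 2k + 1) = (x + 1)(x + c0)],
   valid for every [s]; [s <= 1] is needed only for row [0] to vanish. *)
Lemma genEuler_falling (s : nat) : (s <= 1)%N -> forall n k,
  genEuler (-1) 2 (c0 + s%:R) s%:R n k * hgeom_denom k =
  rising (c0 + s%:R) n * falling (n + s)%:R k.*2.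
Proof.
move=> le_s1; elim=> [|n IH] [|k].
- by rewrite hgeom_denom0 rising0 falling0 mulr1.
- rewrite mul0r rising0 mul1r add0n falling_nat_eq0 // doubleS ltnS.
  exact: leq_trans le_s1 (ltn0Sn _).
- have := IH 0; rewrite !hgeom_denom0 !falling0 !mulr1 => IH0.
  by rewrite /= IH0 risingS; ring.
rewrite [genEuler _ _ _ _ n.+1 k.+1]/= mulrDl -!mulrA IH hgeom_denomS.
rewrite [_ * (hgeom_denom k * _)]mulrA IH.
rewrite risingS addSn doubleS [falling (n + s).+1%:R _]fallingSr.
rewrite -[(n + s).+1%:R]natr1 addrK !fallingS -!natr1 -addnn !natrD.
ring.
Qed.

Lemma falling_double_div (x : F) k :
  falling x k.*2 / hgeom_denom k =
  rising (- (x / 2)) k * rising (- (x / 2) + 1 / 2) k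
    / (k`!%:R * rising (c0 / 2 + 1 / 2) k).
Proof.
rewrite falling_double /hgeom_denom invfM mulrACA divff ?mul1r //.
by rewrite expf_neq0 // pnatr_eq0.
Qed.

Hypothesis c0_not_neg_odd : forall m : nat, c0 != - (m.*2.+1)%:R.

Lemma hgeom_denom_neq0 k : hgeom_denom k != 0.
Proof.
have two_ne0 : 2 != 0 :> F by rewrite pnatr_eq0.
rewrite /hgeom_denom /rising !mulf_neq0 ?expf_neq0 ?pnatr_eq0 -?lt0n ?fact_gt0 //.
apply/prodf_neq0 => i _; apply: contraNneq (c0_not_neg_odd i) => half_eq0.
apply/eqP; have -> : c0 = 2 * (c0 / 2 + 1 / 2 + i%:R) - (i.*2.+1)%:R.
  by rewrite -addn1 -addnn !natrD; field.
by rewrite half_eq0 mulr0 sub0r.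
Qed.

Lemma genEuler_closed (s : nat) n k : (s <= 1)%N ->
  genEuler (-1) 2 (c0 + s%:R) s%:R n k =
  rising (c0 + s%:R) n * falling (n + s)%:R k.*2 / hgeom_denom k.
Proof. by move=> le_s1; rewrite -genEuler_falling // mulfK ?hgeom_denom_neq0. Qed.

Lemma genEuler_eq0 (s : nat) n k : (s <= 1)%N -> ((n + s)./2 < k)%N ->
  genEuler (-1) 2 (c0 + s%:R) s%:R n k = 0.
Proof.
move=> le_s1 lt_k; apply/eqP; rewrite -(mulIr_eq0 _ (mulIf (hgeom_denom_neq0 k))).
rewrite genEuler_falling // falling_nat_eq0 ?mulr0 //.
by rewrite -ltn_half_double.
Qed.

End ShiftedEulerian.

Theorem mainTheorem18 (R : realType) (c0 : R[i])
  (hc0 : forall m : nat, c0 != - (m.*2.+1)%:R) :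
  forall n k : nat, (k <= n)%N ->
    [/\ genEuler (-1) 2 c0 0 n k =
          rising c0 n *
          (rising (- (n%:R / 2)) k * rising (- (n%:R / 2) + 1 / 2) k)
          / (k`!%:R * rising (c0 / 2 + 1 / 2) k),
        genEuler (-1) 2 (c0 + 1) 1 n k =
          rising (c0 + 1) n *
          (rising (- (n%:R / 2)) k * rising (- (n%:R / 2) - 1 / 2) k)
          / (k`!%:R * rising (c0 / 2 + 1 / 2) k),
        genEuler (-1) 2 c0 0 n k != 0 -> (k <= n./2)%N
      & genEuler (-1) 2 (c0 + 1) 1 n k != 0 -> (k <= n.+1./2)%N].
Proof.
move=> n k _.
have E0 := @genEuler_closed _ _ hc0 0 n k (leq0n 1).
have E0_eq0 := @genEuler_eq0 _ _ hc0 0 n k (leq0n 1).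
have E1 := @genEuler_closed _ _ hc0 1 n k (leqnn 1).
have E1_eq0 := @genEuler_eq0 _ _ hc0 1 n k (leqnn 1).
rewrite addr0 addn0 in E0 E0_eq0; rewrite addn1 in E1 E1_eq0.
split.
- by rewrite E0 -mulrA falling_double_div mulrA.
- have shift_half : (n.+1%:R / 2 : R[i]) = n%:R / 2 + 1 / 2 by rewrite -natr1 mulrDl.
  rewrite E1 -mulrA falling_double_div mulrA shift_half opprD subrK.
  by rewrite [rising (- (n%:R / 2)) k * _]mulrC.
- by apply: contraNleq => lt_k; rewrite E0_eq0.
- by apply: contraNleq => lt_k; rewrite E1_eq0.
Qed.
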